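(* For every open interval $I$ of $\mathbb{Z}^{\omega}$ there is an order-isomorphism $f_I: \mathbb{Z}^{\omega}\to I$ such that $f_I[A] = A\cap I$ for every subset $A\subseteq \mathbb{Z}^{\omega}$ that is closed under tail-equivalence.
   Context: $\mathbb{Z}^{\omega}$ is the set of integer sequences with the lexicographic order ($u<v$ iff $u_n<v_n$ at the least $n$ with $u_n\ne v_n$). For a finite nonempty integer sequence $r$ and a sequence $u$, $ru$ is concatenation. $u,v\in\mathbb{Z}^{\omega}$ are tail-equivalent if $u=ru'$ and $v=su'$ for some finite sequences $r,s$ (possibly of different lengths) and some $u'\in\mathbb{Z}^{\omega}$; $A$ is closed under tail-equivalence if it is a union of tail-equivalence classes. An open interval of a linear order is a nonempty convex subset with neither a greatest nor a least element. *)

From Stdlib Require Import ZArith List Arith.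
Open Scope Z_scope.

Definition Zw := nat -> Z.

Definition lex_lt (u v : Zw) : Prop :=
  exists n : nat, (forall m : nat, (m < n)%nat -> u m = v m) /\ u n < v n.

Definition concat (r : list Z) (u : Zw) : Zw :=
  fun n => if Nat.ltb n (length r) then nth n r 0 else u (n - length r)%nat.

Definition tail_equiv (u v : Zw) : Prop :=
  exists (r s : list Z) (u' : Zw),
    (forall n, u n = concat r u' n) /\ (forall n, v n = concat s u' n).

Definition tail_closed (A : Zw -> Prop) : Prop :=
  forall u v, tail_equiv u v -> A u -> A v.

Definition open_interval (I : Zw -> Prop) : Prop :=
  (exists x, I x) /\
  (forall x y z, I x -> I z -> lex_lt x y -> lex_lt y z -> I y) /\
  (forall x, I x -> exists y, I y /\ lex_lt x y) /\
  (forall x, I x -> exists y, I y /\ lex_lt y x).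

(** Call a set S of integer sequences _tame_ if there is an order-isomorphism
    f from Z^omega onto S such that every x is shift-equivalent to f x (some
    tail of x is a tail of f x).  Such an f maps every tail-closed A onto
    A ∩ S, so the theorem reduces to: every open interval is tame.

    1. Tameness is preserved by tail-preserving strictly increasing images,
       by negation, and by lexicographic sums indexed by a tame set of first
       coordinates.
    2. Slabs {u | lo < u 0 < hi} are tame: the map u ↦ (if u < 0^ω then 0::u
       else u) identifies Z^ω with {u | 0 <= u 0}, and all other slabs are
       obtained from this one by shifting, negating and restricting.  Hence
       cylinders over a fixed prefix are tame, and so are "cones"
       {y | y follows e below m and y < e} (an ordered sum of cylinders).
    3. Every down-set of Z^ω without maximum is {y | y < s} for a cut s : a
       sequence in Z ∪ {±oo}; so an open interval is {y | t < y < s} for two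
       cuts t, s.  Splitting at the first index where t and s differ, it is
       the ordered union of an upper cone above t, a cylinder and a lower
       cone below s, hence tame. *)

From Pilot Require Import Defs.
From Stdlib Require Import ZArith List Lia Classical ClassicalEpsilon FunctionalExtensionality.
Open Scope Z_scope.

Lemma least_nat (P : nat -> Prop) :
  (exists n, P n) -> exists n, P n /\ forall m, (m < n)%nat -> ~ P m.
Proof.
  intros [n Hn]. induction n as [n IH] using (well_founded_induction lt_wf).
  destruct (classic (exists m, (m < n)%nat /\ P m)) as [[m [Hm Pm]]|Hnone].
  - exact (IH m Hm Pm).
  - exists n; split; [exact Hn|]. intros m Hm Pm. apply Hnone; eauto.
Qed.

Lemma lex_irrefl u : ~ lex_lt u u.
Proof. intros [n [_ H]]. lia. Qed.

Lemma lex_trans u v w : lex_lt u v -> lex_lt v w -> lex_lt u w.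
Proof.
  intros [i [Hi Hi']] [j [Hj Hj']].
  exists (Nat.min i j); split.
  - intros m Hm. rewrite Hi, Hj by lia. reflexivity.
  - destruct (Nat.lt_total i j) as [H|[H|H]].
    + rewrite Nat.min_l by lia. rewrite <- (Hj i H). exact Hi'.
    + subst j. rewrite Nat.min_id. lia.
    + rewrite Nat.min_r by lia. rewrite (Hi j H). exact Hj'.
Qed.

Lemma lex_total u v : lex_lt u v \/ u = v \/ lex_lt v u.
Proof.
  destruct (classic (exists n, u n <> v n)) as [Hdiff|Hsame].
  - destruct (least_nat _ Hdiff) as [n [Hn Hmin]].
    assert (Hpre : forall m, (m < n)%nat -> u m = v m)
      by (intros m Hm; apply NNPP, Hmin, Hm).
    destruct (Z.lt_total (u n) (v n)) as [H|[H|H]].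
    + left; exists n; auto.
    + contradiction.
    + right; right; exists n; split; auto. intros m Hm; symmetry; auto.
  - right; left. apply functional_extensionality; intros n.
    apply NNPP; intros H; apply Hsame; eauto.
Qed.

Lemma increasing_reflects (f : Zw -> Zw) :
  (forall u v, lex_lt u v -> lex_lt (f u) (f v)) ->
  forall u v, lex_lt u v <-> lex_lt (f u) (f v).
Proof.
  intros Hf u v; split; [apply Hf|]. intros H.
  destruct (lex_total u v) as [Huv|[<-|Hvu]]; [exact Huv| |];
    exfalso; apply (lex_irrefl (f u)); [exact H|].
  exact (lex_trans _ _ _ H (Hf _ _ Hvu)).
Qed.

(** ** Shift-equivalence, a concrete form of tail-equivalence *)

Definition shift_equiv (u v : Zw) : Prop :=
  exists i j : nat, forall n, u (i + n)%nat = v (j + n)%nat.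

Lemma shift_equiv_refl u : shift_equiv u u.
Proof. exists 0%nat, 0%nat; reflexivity. Qed.

Lemma shift_equiv_sym u v : shift_equiv u v -> shift_equiv v u.
Proof. intros [i [j H]]; exists j, i; intros; symmetry; apply H. Qed.

Lemma shift_equiv_trans u v w : shift_equiv u v -> shift_equiv v w -> shift_equiv u w.
Proof.
  intros [i [j H]] [j' [k H']]. exists (i + j')%nat, (k + j)%nat. intros n.
  replace (i + j' + n)%nat with (i + (j' + n))%nat by lia. rewrite H.
  replace (j + (j' + n))%nat with (j' + (j + n))%nat by lia. rewrite H'.
  f_equal; lia.
Qed.

Lemma nth_map_seq (y : Zw) n k : (k < n)%nat -> nth k (map y (seq 0 n)) 0 = y k.
Proof.
  intros Hk. rewrite nth_indep with (d' := y 0%nat) by (rewrite length_map, length_seq; auto).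
  rewrite map_nth, seq_nth by auto. reflexivity.
Qed.

(** Shift-equivalent sequences are tail-equivalent: cut off the first [i]
    resp. [j] terms as the finite prefixes. *)
Lemma shift_equiv_tail_equiv u v : shift_equiv u v -> tail_equiv u v.
Proof.
  intros [i [j H]].
  exists (map u (seq 0 i)), (map v (seq 0 j)), (fun n => u (i + n)%nat).
  split; intros n; unfold Defs.concat; rewrite length_map, length_seq.
  - destruct (Nat.ltb_spec n i); [rewrite nth_map_seq by auto; reflexivity|].
    f_equal; lia.
  - destruct (Nat.ltb_spec n j); [rewrite nth_map_seq by auto; reflexivity|].
    rewrite H. f_equal; lia.
Qed.

(** ** Tame sets *)

Definition tame_iso (f : Zw -> Zw) (S : Zw -> Prop) : Prop :=
  (forall x, S (f x)) /\ (forall y, S y -> exists x, f x = y) /\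
  (forall x y, lex_lt x y <-> lex_lt (f x) (f y)) /\ (forall x, shift_equiv x (f x)).

Definition tame (S : Zw -> Prop) : Prop := exists f, tame_iso f S.

Lemma tame_ext (S T : Zw -> Prop) : (forall y, S y <-> T y) -> tame S -> tame T.
Proof.
  intros E [f [Hin [Hsurj [Hord Hsh]]]]. exists f; split; [|split; [|split]]; auto.
  - intros x; apply E, Hin.
  - intros y Hy; apply Hsurj, E, Hy.
Qed.

Lemma tame_full : tame (fun _ => True).
Proof.
  exists (fun x => x); split; [|split; [|split]]; eauto using shift_equiv_refl.
  intros; reflexivity.
Qed.

Lemma tame_image (T S : Zw -> Prop) (e : Zw -> Zw) :
  tame T -> (forall u v, lex_lt u v -> lex_lt (e u) (e v)) ->
  (forall u, shift_equiv u (e u)) ->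
  (forall y, S y <-> exists x, T x /\ e x = y) -> tame S.
Proof.
  intros [f [Hin [Hsurj [Hord Hsh]]]] He Hshe E.
  assert (Hinc : forall x y, lex_lt x y -> lex_lt (e (f x)) (e (f y)))
    by (intros x y H; apply He, (proj1 (Hord _ _)), H).
  exists (fun x => e (f x)); split; [|split; [|split]].
  - intros x; apply E; eauto.
  - intros y Hy. apply E in Hy as [x [Tx <-]]. destruct (Hsurj x Tx) as [x' <-]. eauto.
  - exact (increasing_reflects _ Hinc).
  - intros x. exact (shift_equiv_trans _ _ _ (Hsh x) (Hshe (f x))).
Qed.

Definition neg (u : Zw) : Zw := fun n => - u n.

Lemma neg_neg u : neg (neg u) = u.
Proof. apply functional_extensionality; intros; unfold neg; lia. Qed.

Lemma neg_lt u v : lex_lt u v -> lex_lt (neg v) (neg u).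
Proof.
  intros [n [H1 H2]]; exists n; unfold neg; split; [|lia].
  intros m Hm; rewrite H1; auto.
Qed.

Lemma tame_neg (S : Zw -> Prop) : tame S -> tame (fun y => S (neg y)).
Proof.
  intros [f [Hin [Hsurj [Hord Hsh]]]].
  assert (Hinc : forall x y, lex_lt x y -> lex_lt (neg (f (neg x))) (neg (f (neg y))))
    by (intros x y H; apply neg_lt, (proj1 (Hord _ _)), neg_lt, H).
  exists (fun x => neg (f (neg x))); split; [|split; [|split]].
  - intros x; cbv beta; rewrite neg_neg; apply Hin.
  - intros y Hy. destruct (Hsurj _ Hy) as [x Hx].
    exists (neg x). rewrite neg_neg, Hx, neg_neg; reflexivity.
  - exact (increasing_reflects _ Hinc).
  - intros x. destruct (Hsh (neg x)) as [i [j H]].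
    exists i, j; intros n. specialize (H n). unfold neg in *. lia.
Qed.

(** ** Lexicographic sums *)

Definition zcons (a : Z) (x : Zw) : Zw := fun n => match n with O => a | S k => x k end.
Definition ztl (u : Zw) : Zw := fun n => u (S n).

Lemma zcons_eta u : u = zcons (u 0%nat) (ztl u).
Proof. apply functional_extensionality; intros [|n]; reflexivity. Qed.

Lemma zcons_lt_inv a b x y :
  lex_lt (zcons a x) (zcons b y) -> a < b \/ (a = b /\ lex_lt x y).
Proof.
  intros [[|n] [H1 H2]]; [left; exact H2|right].
  split; [exact (H1 0%nat ltac:(lia))|].
  exists n; split; [|exact H2]. intros m Hm; apply (H1 (S m)); lia.
Qed.

Lemma zcons_lt a x y : lex_lt x y -> lex_lt (zcons a x) (zcons a y).
Proof.
  intros [n [H1 H2]]. exists (S n); split; [|exact H2].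
  intros [|m] Hm; [reflexivity|]. apply H1; lia.
Qed.

Lemma shift_equiv_zcons a x : shift_equiv x (zcons a x).
Proof. exists 0%nat, 1%nat; reflexivity. Qed.

(** If the first coordinates range over a tame set [J] of integers, and over
    each [k] in [J] sits a tame block [P k], the blocks being ordered like
    their indices, then their union is tame: map [zcons k x] to the image of
    [x] in the block [P k]. *)
Lemma tame_sum (J : Z -> Prop) (P : Z -> Zw -> Prop) :
  tame (fun u => J (u 0%nat)) -> (forall k, J k -> tame (P k)) ->
  (forall k k' x y, J k -> J k' -> k < k' -> P k x -> P k' y -> lex_lt x y) ->
  tame (fun y => exists k, J k /\ P k y).
Proof.
  intros [h [Hin [Hsurj [Hord Hsh]]]] HP Hblocks.
  assert (HF : forall k, exists F, J k -> tame_iso F (P k)).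
  { intros k. destruct (classic (J k)) as [Hk|Hk].
    - destruct (HP k Hk) as [F HF]; exists F; auto.
    - exists (fun x => x); tauto. }
  apply choice in HF as [F HF].
  set (g := fun u => F (h u 0%nat) (ztl (h u))).
  assert (HFin : forall u, P (h u 0%nat) (g u)) by (intros u; apply (HF _ (Hin u))).
  assert (Hinc : forall u v, lex_lt u v -> lex_lt (g u) (g v)).
  { intros u v Huv. apply Hord in Huv.
    rewrite (zcons_eta (h u)), (zcons_eta (h v)) in Huv.
    apply zcons_lt_inv in Huv as [Hlt|[Heq Hlt]].
    - exact (Hblocks _ _ _ _ (Hin u) (Hin v) Hlt (HFin u) (HFin v)).
    - unfold g. rewrite Heq. destruct (HF _ (Hin v)) as [_ [_ [Hv _]]].
      exact (proj1 (Hv _ _) Hlt). }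
  exists g; split; [|split; [|split]].
  - intros u. exists (h u 0%nat); auto.
  - intros y [k [Jk Pk]]. destruct (HF k Jk) as [_ [Hs _]]. destruct (Hs y Pk) as [x <-].
    destruct (Hsurj (zcons k x) Jk) as [u Hu].
    exists u. unfold g. rewrite Hu. reflexivity.
  - exact (increasing_reflects _ Hinc).
  - intros u. apply (shift_equiv_trans _ _ _ (Hsh u)).
    rewrite (zcons_eta (h u)) at 1.
    apply (shift_equiv_trans _ (ztl (h u))); [apply shift_equiv_sym, shift_equiv_zcons|].
    apply (HF _ (Hin u)).
Qed.

(** ** Slabs of first coordinates *)

Inductive ZE := MInf | Fin (a : Z) | PInf.

Definition ltE (a b : ZE) : Prop :=
  match a, b with
  | MInf, MInf => False
  | MInf, _ => True
  | Fin x, Fin y => x < y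
  | Fin _, PInf => True
  | _, _ => False
  end.

Lemma ltE_irrefl a : ~ ltE a a.
Proof. destruct a; simpl; lia. Qed.

Lemma ltE_trans a b c : ltE a b -> ltE b c -> ltE a c.
Proof. destruct a, b, c; simpl; auto; lia. Qed.

Definition slab (lo hi : ZE) (u : Zw) : Prop :=
  ltE lo (Fin (u 0%nat)) /\ ltE (Fin (u 0%nat)) hi.

Definition zero_seq : Zw := fun _ => 0.

Lemma below_zero_head u : lex_lt u zero_seq -> u 0%nat <= 0.
Proof. intros [[|n] [H1 H2]]; [unfold zero_seq in H2; lia|]. rewrite (H1 0%nat); [reflexivity|lia]. Qed.

Lemma not_below_zero_head u : ~ lex_lt u zero_seq -> 0 <= u 0%nat.
Proof.
  intros H. apply Z.nlt_ge. intros Hneg. apply H.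
  exists 0%nat; split; [intros; lia|exact Hneg].
Qed.

Lemma zero_seq_zcons : zero_seq = zcons 0 zero_seq.
Proof. apply functional_extensionality; intros [|n]; reflexivity. Qed.

(** The map [u ↦ 0::u] on sequences below 0^ω and the identity elsewhere is
    an order-isomorphism of Z^ω onto {u | 0 <= u 0}. *)
Definition to_nonneg (u : Zw) : Zw :=
  if excluded_middle_informative (lex_lt u zero_seq) then zcons 0 u else u.

Lemma to_nonneg_increasing u v : lex_lt u v -> lex_lt (to_nonneg u) (to_nonneg v).
Proof.
  intros Huv. unfold to_nonneg.
  destruct (excluded_middle_informative (lex_lt u zero_seq)) as [Hu|Hu];
  destruct (excluded_middle_informative (lex_lt v zero_seq)) as [Hv|Hv].
  - apply zcons_lt, Huv.
  - assert (Hu0 : lex_lt (zcons 0 u) zero_seq)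
      by (rewrite zero_seq_zcons; apply zcons_lt, Hu).
    destruct (lex_total v zero_seq) as [H|[->|H]]; [contradiction|exact Hu0|].
    exact (lex_trans _ _ _ Hu0 H).
  - exfalso. exact (Hu (lex_trans _ _ _ Huv Hv)).
  - exact Huv.
Qed.

Lemma to_nonneg_shift u : shift_equiv u (to_nonneg u).
Proof.
  unfold to_nonneg. destruct (excluded_middle_informative _).
  - apply shift_equiv_zcons.
  - apply shift_equiv_refl.
Qed.

Lemma to_nonneg_image hi : ltE (Fin 0) hi -> forall y,
  0 <= y 0%nat /\ ltE (Fin (y 0%nat)) hi <->
  exists x, ltE (Fin (x 0%nat)) hi /\ to_nonneg x = y.
Proof.
  intros Hhi y; split.
  - intros [Hy0 Hyhi]. destruct (classic (lex_lt y zero_seq)) as [Hy|Hy].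
    + assert (Hhead : y 0%nat = 0) by (pose proof (below_zero_head _ Hy); lia).
      rewrite (zcons_eta y), Hhead, zero_seq_zcons in Hy.
      apply zcons_lt_inv in Hy as [Hy|[_ Htl]]; [lia|].
      exists (ztl y); split.
      * pose proof (below_zero_head _ Htl). destruct hi; simpl in *; auto; lia.
      * unfold to_nonneg. destruct (excluded_middle_informative _); [|contradiction].
        rewrite (zcons_eta y) at 2. rewrite Hhead. reflexivity.
    + exists y; split; [exact Hyhi|]. unfold to_nonneg.
      destruct (excluded_middle_informative _); [contradiction|reflexivity].
  - intros [x [Hx <-]]. unfold to_nonneg.
    destruct (excluded_middle_informative _) as [_|Hnb]; simpl.
    + split; [lia|exact Hhi].
    + split; [apply not_below_zero_head, Hnb|exact Hx].
Qed.

Lemma tame_nonneg_below hi : ltE (Fin 0) hi ->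
  tame (fun u => ltE (Fin (u 0%nat)) hi) ->
  tame (fun u => 0 <= u 0%nat /\ ltE (Fin (u 0%nat)) hi).
Proof.
  intros Hhi H.
  exact (tame_image _ _ to_nonneg H to_nonneg_increasing to_nonneg_shift
           (to_nonneg_image hi Hhi)).
Qed.

Definition shift_head (c : Z) (u : Zw) : Zw := zcons (u 0%nat + c) (ztl u).

Lemma tame_shift_head (P : Z -> Prop) c :
  tame (fun u => P (u 0%nat)) -> tame (fun u => P (u 0%nat - c)).
Proof.
  intros H. apply (tame_image _ _ (shift_head c) H).
  - intros u v Huv. rewrite (zcons_eta u), (zcons_eta v) in Huv.
    apply zcons_lt_inv in Huv as [Hlt|[Heq Hlt]]; unfold shift_head.
    + exists 0%nat; split; [intros; lia|simpl; lia].
    + rewrite Heq. apply zcons_lt, Hlt.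
  - intros u. exists 1%nat, 1%nat. reflexivity.
  - intros y; split.
    + intros Hy. exists (shift_head (- c) y). split.
      * simpl. replace (y 0%nat + - c) with (y 0%nat - c) by lia. exact Hy.
      * apply functional_extensionality; intros [|n]; simpl; [lia|reflexivity].
    + intros [x [Hx <-]]. simpl. replace (x 0%nat + c - c) with (x 0%nat) by lia. exact Hx.
Qed.

Lemma tame_slab lo hi : (exists a, ltE lo (Fin a) /\ ltE (Fin a) hi) -> tame (slab lo hi).
Proof.
  intros [a [Hlo Hhi]].
  assert (Hnonneg : tame (fun u => 0 <= u 0%nat)).
  { apply (tame_ext (fun u => 0 <= u 0%nat /\ ltE (Fin (u 0%nat)) PInf)); [simpl; tauto|].
    apply tame_nonneg_below; [exact I|].
    apply (tame_ext (fun _ => True)); [simpl; tauto|apply tame_full]. }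
  assert (Hbelow : forall b, tame (fun u => u 0%nat < b)).
  { intros b. pose proof (tame_neg _ (tame_shift_head (fun z => 0 <= z) (1 - b) Hnonneg)) as G.
    eapply tame_ext; [|exact G]. intros y; cbv beta; unfold neg; lia. }
  destruct lo as [|l|], hi as [|h|]; simpl in *; try tauto; try lia.
  - apply (tame_ext (fun u => u 0%nat < h)); [unfold slab; simpl; tauto|apply Hbelow].
  - apply (tame_ext (fun _ => True)); [unfold slab; simpl; tauto|apply tame_full].
  - pose proof (tame_shift_head (fun z => 0 <= z /\ ltE (Fin z) (Fin (h - l - 1))) (l + 1)
                  (tame_nonneg_below (Fin (h - l - 1)) ltac:(simpl; lia) (Hbelow _))) as G.
    eapply tame_ext; [|exact G]. intros y; unfold slab; simpl; lia.
  - pose proof (tame_shift_head (fun z => 0 <= z) (l + 1) Hnonneg) as G.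
    eapply tame_ext; [|exact G]. intros y; unfold slab; simpl; lia.
Qed.

(** A set of first coordinates forming an initial segment of the naturals
    is tame: it is the slab (-1, j0) or (-1, +oo). *)
Lemma tame_initial_segment (J : Z -> Prop) :
  J 0 -> (forall k, J k -> 0 <= k) -> (forall k k', 0 <= k' <= k -> J k -> J k') ->
  tame (fun u => J (u 0%nat)).
Proof.
  intros J0 Hpos Hdown.
  destruct (classic (exists j, 0 <= j /\ ~ J j)) as [[j [Hj Hjout]]|Hall].
  - destruct (least_nat (fun n => ~ J (Z.of_nat n))) as [j0 [Hj0 Hmin]].
    { exists (Z.to_nat j). rewrite Z2Nat.id by exact Hj. exact Hjout. }
    assert (Hj0pos : (0 < j0)%nat) by (destruct j0; [contradiction|lia]).
    apply (tame_ext (slab (Fin (-1)) (Fin (Z.of_nat j0)))).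
    + intros y; unfold slab; simpl. split.
      * intros [H1 H2]. rewrite <- (Z2Nat.id (y 0%nat)) by lia.
        apply NNPP, Hmin. lia.
      * intros Hy. split; [pose proof (Hpos _ Hy); lia|].
        apply Z.nle_gt. intros Hge. exact (Hj0 (Hdown (y 0%nat) (Z.of_nat j0) ltac:(lia) Hy)).
    + apply tame_slab. exists 0; simpl; lia.
  - apply (tame_ext (slab (Fin (-1)) PInf)).
    + intros y; unfold slab; simpl. split.
      * intros [H _]. apply NNPP. intros Hout. apply Hall. exists (y 0%nat); split; [lia|exact Hout].
      * intros Hy. split; [pose proof (Hpos _ Hy); lia|exact I].
    + apply tame_slab. exists 0; simpl; split; [lia|exact I].
Qed.

(** The pieces into which intervals are cut below may be empty, so we track
    "tame or empty". *)
Definition tame_or_empty (S : Zw -> Prop) : Prop := (forall y, ~ S y) \/ tame S.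

Lemma tame_or_empty_intro (S : Zw -> Prop) : ((exists y, S y) -> tame S) -> tame_or_empty S.
Proof.
  intros H. destruct (classic (exists y, S y)) as [Hne|Hemp].
  - right; exact (H Hne).
  - left; intros y Hy; apply Hemp; eauto.
Qed.

Lemma tame_or_empty_union (S T : Zw -> Prop) :
  tame_or_empty S -> tame_or_empty T -> (forall x y, S x -> T y -> lex_lt x y) ->
  tame_or_empty (fun y => S y \/ T y).
Proof.
  intros [HS|HS] [HT|HT] Hord.
  - left; intros y [H|H]; [exact (HS y H)|exact (HT y H)].
  - right. apply (tame_ext T); [|exact HT]. intros y; split; [now right|].
    intros [H|H]; [destruct (HS y H)|exact H].
  - right. apply (tame_ext S); [|exact HS]. intros y; split; [now left|].
    intros [H|H]; [exact H|destruct (HT y H)].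
  - right.
    set (J := fun k : Z => k = 0 \/ k = 1).
    set (P := fun k : Z => if Z.eqb k 0 then S else T).
    apply (tame_ext (fun y => exists k, J k /\ P k y)).
    + intros y; unfold J, P; split.
      * intros [k [[->| ->] H]]; simpl in H; auto.
      * intros [H|H]; [exists 0|exists 1]; simpl; auto.
    + apply tame_sum.
      * apply tame_initial_segment; unfold J; intros; lia.
      * intros k [->| ->]; simpl; assumption.
      * intros k k' x y [->| ->] [->| ->] Hkk'; simpl; try lia. apply Hord.
Qed.

Definition extends (e : nat -> ZE) (n : nat) (y : Zw) : Prop :=
  forall k, (k < n)%nat -> e k = Fin (y k).

Lemma extends_weaken e n n' y : (n' <= n)%nat -> extends e n y -> extends e n' y.
Proof. intros Hle H k Hk; apply H; lia. Qed.

Lemma extends_agree e n x y :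
  extends e n x -> extends e n y -> forall k, (k < n)%nat -> x k = y k.
Proof. intros Hx Hy k Hk. pose proof (Hx k Hk) as E. rewrite Hy in E by exact Hk. congruence. Qed.

Definition cylinder (e : nat -> ZE) (n : nat) (lo hi : ZE) (y : Zw) : Prop :=
  extends e n y /\ ltE lo (Fin (y n)) /\ ltE (Fin (y n)) hi.

Definition prepend (p : Zw) (n : nat) (x : Zw) : Zw :=
  fun k => if (k <? n)%nat then p k else x (k - n)%nat.

(** A nonempty cylinder is the image of a slab under prepending a fixed
    prefix. *)
Lemma tame_cylinder e n lo hi :
  (exists y, cylinder e n lo hi y) -> tame (cylinder e n lo hi).
Proof.
  intros [y0 [Hy0 [Hlo Hhi]]].
  apply (tame_image (slab lo hi) _ (prepend y0 n)).
  - apply tame_slab. eauto.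
  - intros u v [m [H1 H2]]. exists (n + m)%nat. unfold prepend; split.
    + intros k Hk. destruct (Nat.ltb_spec k n); [reflexivity|]. apply H1; lia.
    + destruct (Nat.ltb_spec (n + m) n); [lia|]. replace (n + m - n)%nat with m by lia. exact H2.
  - intros u. exists 0%nat, n. intros k. unfold prepend.
    destruct (Nat.ltb_spec (n + k) n); [lia|]. f_equal; lia.
  - intros y; split.
    + intros [Hy [H1 H2]]. exists (fun k => y (n + k)%nat). split.
      * unfold slab. rewrite Nat.add_0_r. auto.
      * apply functional_extensionality; intros k. unfold prepend.
        destruct (Nat.ltb_spec k n).
        -- exact (extends_agree _ _ _ _ Hy0 Hy k H).
        -- f_equal; lia.
    + intros [x [[Hx1 Hx2] <-]]. unfold cylinder, prepend.
      destruct (Nat.ltb_spec n n); [lia|]. rewrite Nat.sub_diag.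
      split; [|auto]. intros k Hk. destruct (Nat.ltb_spec k n); [auto|lia].
Qed.

Definition lt_cut (y : Zw) (e : nat -> ZE) : Prop :=
  exists n, extends e n y /\ ltE (Fin (y n)) (e n).
Definition gt_cut (e : nat -> ZE) (y : Zw) : Prop :=
  exists n, extends e n y /\ ltE (e n) (Fin (y n)).

Definition lower_cone (e : nat -> ZE) (m : nat) (y : Zw) : Prop :=
  extends e m y /\ lt_cut y e.

Lemma lt_cut_index e y n i :
  extends e n y -> ltE (Fin (y i)) (e i) -> (n <= i)%nat.
Proof.
  intros Hn Hi. apply Nat.nlt_ge. intros Hlt.
  rewrite (Hn i Hlt) in Hi. exact (ltE_irrefl _ Hi).
Qed.

Lemma cylinder_branch_down e j j' :
  (exists y, cylinder e j MInf (e j) y) -> (j' <= j)%nat ->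
  exists y, cylinder e j' MInf (e j') y.
Proof.
  intros [y [Hy [_ Hlt]]] Hj. destruct (Nat.eq_dec j' j) as [->|Hne].
  { exists y; split; [exact Hy|split; [exact I|exact Hlt]]. }
  exists (fun k => if (k =? j')%nat then y k - 1 else y k). split; [|split].
  - intros k Hk. destruct (Nat.eqb_spec k j'); [lia|]. apply Hy; lia.
  - exact I.
  - rewrite Nat.eqb_refl, (Hy j') by lia. simpl; lia.
Qed.

(** The lower cone below [e] from [m] on is the ordered union, over the
    indices [j >= m] at which it branches off [e], of the cylinders
    {y | y follows e below j, y j < e j}; the nonempty ones form an initial
    segment. *)
Lemma tame_lower_cone e m : (exists y, lower_cone e m y) -> tame (lower_cone e m).
Proof.
  intros [y0 [Hy0 [i [Hi1 Hi2]]]].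
  set (P := fun k : Z => cylinder e (m + Z.to_nat k) MInf (e (m + Z.to_nat k)%nat)).
  set (J := fun k : Z => 0 <= k /\ exists y, P k y).
  apply (tame_ext (fun y => exists k, J k /\ P k y)).
  { intros y; split.
    - intros [k [_ [Hk [_ Hlt]]]].
      split; [apply (extends_weaken _ (m + Z.to_nat k)); [lia|exact Hk]|]. eexists; eauto.
    - intros [Hm [n [Hn Hlt]]].
      pose proof (lt_cut_index _ _ _ _ Hm Hlt) as Hmn.
      assert (Hp : P (Z.of_nat (n - m)) y).
      { unfold P. rewrite Nat2Z.id. replace (m + (n - m))%nat with n by lia.
        split; [exact Hn|split; [exact I|exact Hlt]]. }
      exists (Z.of_nat (n - m)). split; [split; [lia|eauto]|exact Hp]. }
  apply tame_sum.
  - apply tame_initial_segment.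
    + split; [lia|]. unfold P; simpl. rewrite Nat.add_0_r.
      apply (cylinder_branch_down e i); [|exact (lt_cut_index _ _ _ _ Hy0 Hi2)].
      exists y0; split; [exact Hi1|split; [exact I|exact Hi2]].
    + intros k [Hk _]; exact Hk.
    + intros k k' Hk' [Hk [y Hy]]. split; [lia|].
      apply (cylinder_branch_down e (m + Z.to_nat k)); [eauto|lia].
  - intros k [_ Hne]. exact (tame_cylinder _ _ _ _ Hne).
  - intros k k' x y [Hk _] [Hk' _] Hkk' [Hx [_ Hxlt]] [Hy _].
    exists (m + Z.to_nat k)%nat; split.
    + apply (extends_agree e); [exact Hx|]. apply (extends_weaken _ (m + Z.to_nat k')); [lia|exact Hy].
    + rewrite (Hy (m + Z.to_nat k)%nat) in Hxlt by lia. exact Hxlt.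
Qed.

(** ** Cuts *)

Definition is_sup (Q : Z -> Prop) (e : ZE) : Prop :=
  (forall a, Q a -> ltE (Fin a) e \/ Fin a = e) /\
  (forall a, ltE (Fin a) e -> exists b, Q b /\ a < b).

Lemma is_sup_ext (Q Q' : Z -> Prop) e : (forall a, Q a <-> Q' a) -> is_sup Q e -> is_sup Q' e.
Proof.
  intros E [Hub Hleast]. split.
  - intros a Ha; apply Hub, E, Ha.
  - intros a Ha. destruct (Hleast a Ha) as [b [Hb Hab]]. exists b; split; [apply E|]; assumption.
Qed.

Lemma max_Z (Q : Z -> Prop) : (exists a, Q a) -> (exists M, forall b, Q b -> b <= M) ->
  exists a, Q a /\ forall b, Q b -> b <= a.
Proof.
  intros [a0 Ha0] [M HM].
  destruct (least_nat (fun k => Q (M - Z.of_nat k))) as [k [Hk Hmin]].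
  { exists (Z.to_nat (M - a0)). rewrite Z2Nat.id by (specialize (HM a0 Ha0); lia).
    replace (M - (M - a0)) with a0 by lia; exact Ha0. }
  exists (M - Z.of_nat k); split; [exact Hk|]. intros b Hb.
  specialize (HM b Hb). apply Z.nlt_ge. intros Hlt.
  apply (Hmin (Z.to_nat (M - b))); [lia|].
  rewrite Z2Nat.id by lia. replace (M - (M - b)) with b by lia. exact Hb.
Qed.

Lemma sup_exists (Q : Z -> Prop) : exists e, is_sup Q e.
Proof.
  destruct (classic (exists a, Q a)) as [Hne|Hemp].
  - destruct (classic (exists M, forall b, Q b -> b <= M)) as [Hbd|Hunbd].
    + destruct (max_Z Q Hne Hbd) as [a [Ha Hmax]]. exists (Fin a); split.
      * intros b Hb. specialize (Hmax b Hb). simpl.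
        destruct (Z.eq_dec b a) as [->|]; [right; reflexivity|left; lia].
      * intros b Hlt. exists a; split; [exact Ha|exact Hlt].
    + exists PInf; split; [intros; left; exact I|].
      intros a _. apply NNPP; intros Hc. apply Hunbd. exists a. intros b Hb.
      apply Z.nlt_ge. intros Hlt. apply Hc; eauto.
  - exists MInf; split.
    + intros a Ha; exfalso; eauto.
    + intros a H; destruct H.
Qed.

Definition sup (Q : Z -> Prop) : ZE :=
  proj1_sig (constructive_indefinite_description _ (sup_exists Q)).

Lemma sup_spec Q : is_sup Q (sup Q).
Proof. unfold sup. apply proj2_sig. Qed.

Section Cut.

Variable D : Zw -> Prop.

Definition next_values (e : nat -> ZE) (n : nat) (a : Z) : Prop :=
  exists y, D y /\ extends e n y /\ y n = a.

(** The cut of [D]: its [n]-th term is the supremum of the [n]-th terms of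
    the members of [D] that follow the cut below [n].  [cut_prefix n]
    computes the first [n] terms. *)
Fixpoint cut_prefix (n : nat) : nat -> ZE :=
  match n with
  | O => fun _ => MInf
  | S n' => fun k =>
      if (k <? n')%nat then cut_prefix n' k else sup (next_values (cut_prefix n') n')
  end.

Definition cut (k : nat) : ZE := cut_prefix (S k) k.

Lemma cut_prefix_cut n k : (k < n)%nat -> cut_prefix n k = cut k.
Proof.
  induction n as [|n IH]; intros Hk; [lia|]. simpl.
  destruct (Nat.ltb_spec k n); [apply IH; assumption|].
  replace k with n by lia. unfold cut; simpl. rewrite Nat.ltb_irrefl. reflexivity.
Qed.

Lemma cut_is_sup n : is_sup (next_values cut n) (cut n).
Proof.
  unfold cut at 2; simpl. rewrite Nat.ltb_irrefl.
  apply (is_sup_ext (next_values (cut_prefix n) n)); [|apply sup_spec].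
  intros a; split; intros [y [Hy [He Hyn]]]; exists y; (split; [exact Hy|split; [|exact Hyn]]);
    intros k Hk; [rewrite <- (cut_prefix_cut n) by exact Hk|rewrite (cut_prefix_cut n) by exact Hk];
    apply He, Hk.
Qed.

Hypothesis D_down : forall y z, lex_lt y z -> D z -> D y.
Hypothesis D_nomax : forall y, D y -> exists z, D z /\ lex_lt y z.

Lemma down_set_cut y : D y <-> lt_cut y cut.
Proof.
  split.
  - intros Hy. destruct (classic (exists n, cut n <> Fin (y n))) as [Hdiff|Hsame].
    + destruct (least_nat _ Hdiff) as [n [Hn Hmin]].
      assert (Hext : extends cut n y) by (intros k Hk; apply NNPP, Hmin, Hk).
      exists n; split; [exact Hext|].
      destruct (proj1 (cut_is_sup n) (y n)) as [H|H]; [exists y; auto|exact H|congruence].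
    + exfalso.
      assert (Hcut : forall n, cut n = Fin (y n)) by (intros n; apply NNPP; intros H; eauto).
      destruct (D_nomax y Hy) as [z [Hz [n [Hagree Hlt]]]].
      assert (Hext : extends cut n z)
        by (intros k Hk; rewrite <- Hagree by exact Hk; apply Hcut).
      destruct (proj1 (cut_is_sup n) (z n)) as [H|H]; [exists z; auto| |];
        rewrite Hcut in H; simpl in H; [lia|injection H; lia].
  - intros [n [Hext Hlt]].
    destruct (proj2 (cut_is_sup n) _ Hlt) as [b [[z [Hz [Hzext Hzn]]] Hb]].
    apply (D_down y z); [|exact Hz].
    exists n; split; [exact (extends_agree _ _ _ _ Hext Hzext)|lia].
Qed.

End Cut.

Definition negE (a : ZE) : ZE :=
  match a with MInf => PInf | PInf => MInf | Fin x => Fin (- x) end.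

Lemma negE_negE a : negE (negE a) = a.
Proof. destruct a; simpl; [reflexivity|f_equal; lia|reflexivity]. Qed.

Lemma extends_neg e n y : extends e n (neg y) <-> extends (fun k => negE (e k)) n y.
Proof.
  assert (Hfin : forall b a, b = Fin (- a) <-> negE b = Fin a)
    by (intros [|c|] a; simpl; split; intros H; inversion H; f_equal; lia).
  unfold extends, neg. split; intros Hext k Hk; apply Hfin, Hext, Hk.
Qed.

Lemma lt_cut_neg e y : lt_cut (neg y) e <-> gt_cut (fun k => negE (e k)) y.
Proof.
  assert (Hlt : forall b a, ltE (Fin (- a)) b <-> ltE (negE b) (Fin a))
    by (intros [|c|] a; simpl; lia).
  unfold lt_cut, gt_cut. split; intros [n [Hext Hn]]; exists n;
    (split; [apply extends_neg, Hext|apply Hlt, Hn]).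
Qed.

(** Every open interval is {y | t < y < s}: [s] is the cut of its downward
    closure, [t] the negated cut of the negation of its upward closure. *)
Lemma open_interval_cuts I : open_interval I ->
  exists t s, forall y, I y <-> gt_cut t y /\ lt_cut y s.
Proof.
  intros [_ [Hconv [Hmax Hmin]]].
  set (Dlow := fun y => exists z, I z /\ lex_lt y z).
  set (Dhigh := fun y => exists z, I z /\ lex_lt z (neg y)).
  assert (Hlow : forall y, Dlow y <-> lt_cut y (cut Dlow)).
  { apply down_set_cut.
    - intros y z Hyz [w [Hw Hzw]]. exists w; split; [exact Hw|exact (lex_trans _ _ _ Hyz Hzw)].
    - intros y [z [Hz Hyz]]. destruct (Hmax z Hz) as [w [Hw Hzw]].
      exists z; split; [exists w; auto|exact Hyz]. }
  assert (Hhigh : forall y, Dhigh y <-> lt_cut y (cut Dhigh)).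
  { apply down_set_cut.
    - intros y z Hyz [w [Hw Hwz]]. exists w; split; [exact Hw|exact (lex_trans _ _ _ Hwz (neg_lt _ _ Hyz))].
    - intros y [z [Hz Hzy]]. destruct (Hmin z Hz) as [w [Hw Hwz]]. exists (neg z); split.
      + exists w; rewrite neg_neg; auto.
      + pose proof (neg_lt _ _ Hzy) as H. rewrite neg_neg in H. exact H. }
  exists (fun k => negE (cut Dhigh k)), (cut Dlow). intros y.
  rewrite <- lt_cut_neg, <- Hhigh, <- Hlow. unfold Dhigh, Dlow. rewrite neg_neg. split.
  - intros Hy. split; [apply Hmin|apply Hmax]; exact Hy.
  - intros [[z [Hz Hzy]] [w [Hw Hyw]]]. exact (Hconv z y w Hz Hw Hzy Hyw).
Qed.

Definition upper_cone (e : nat -> ZE) (m : nat) (y : Zw) : Prop :=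
  extends e m y /\ gt_cut e y.

Lemma tame_upper_cone e m : (exists y, upper_cone e m y) -> tame (upper_cone e m).
Proof.
  set (e' := fun k => negE (e k)).
  assert (Hmirror : forall y, lower_cone e' m (neg y) <-> upper_cone e m y).
  { intros y. unfold lower_cone, upper_cone. rewrite extends_neg, lt_cut_neg.
    assert (Ee : (fun k => negE (e' k)) = e)
      by (apply functional_extensionality; intros k; apply negE_negE).
    rewrite Ee. reflexivity. }
  intros [y0 Hy0]. apply (tame_ext _ _ Hmirror), tame_neg, tame_lower_cone.
  exists (neg y0). apply Hmirror, Hy0.
Qed.

(** ** Intervals between two cuts *)

Lemma lt_at e n x y : extends e n x -> extends e n y -> x n < y n -> lex_lt x y.
Proof. intros Hx Hy Hlt. exists n; split; [exact (extends_agree _ _ _ _ Hx Hy)|exact Hlt]. Qed.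

Section Between.

Variables t s : nat -> ZE.

Definition between (y : Zw) : Prop := gt_cut t y /\ lt_cut y s.

Lemma between_index y i j :
  extends t i y -> ltE (t i) (Fin (y i)) -> extends s j y -> ltE (Fin (y j)) (s j) ->
  extends t (Nat.min i j) y /\ extends s (Nat.min i j) y /\
  ltE (t (Nat.min i j)) (s (Nat.min i j)).
Proof.
  intros Hti Hi Hsj Hj.
  split; [apply (extends_weaken _ i); [lia|exact Hti]|].
  split; [apply (extends_weaken _ j); [lia|exact Hsj]|].
  destruct (Nat.lt_total i j) as [H|[H|H]].
  - rewrite Nat.min_l, (Hsj i) by lia. exact Hi.
  - subst j. rewrite Nat.min_id. exact (ltE_trans _ _ _ Hi Hj).
  - rewrite Nat.min_r, (Hti j) by lia. exact Hj.
Qed.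

Variable n : nat.
Hypothesis agree_below : forall k, (k < n)%nat -> t k = s k.
Hypothesis diverge : ltE (t n) (s n).

Lemma extends_t_s m y : (m <= n)%nat -> extends t m y <-> extends s m y.
Proof.
  intros Hm. unfold extends. split; intros H k Hk; [rewrite <- agree_below|rewrite agree_below];
    (lia || apply H, Hk).
Qed.

Lemma divergence_index m y :
  extends t m y -> extends s m y -> ltE (t m) (s m) -> m = n.
Proof.
  intros Ht Hs Hlt. destruct (Nat.lt_total m n) as [H|[H|H]]; [|exact H|].
  - rewrite agree_below in Hlt by exact H. destruct (ltE_irrefl _ Hlt).
  - rewrite (Ht n), (Hs n) in diverge by exact H. destruct (ltE_irrefl _ diverge).
Qed.

Definition middle_part : Zw -> Prop := cylinder s n (t n) (s n).

Lemma between_split y :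
  between y <-> (upper_cone t (S n) y \/ middle_part y) \/ lower_cone s (S n) y.
Proof.
  split.
  - intros [[i [Hti Hi]] [j [Hsj Hj]]].
    destruct (between_index y i j Hti Hi Hsj Hj) as [Ht [Hs Hlt]].
    pose proof (divergence_index _ _ Ht Hs Hlt) as Hmin.
    destruct (Nat.eq_dec i n) as [->|Hi']; destruct (Nat.eq_dec j n) as [->|Hj'].
    + left; right. split; [exact Hsj|split; assumption].
    + right. split; [apply (extends_weaken _ j); [lia|exact Hsj]|exists j; auto].
    + left; left. split; [apply (extends_weaken _ i); [lia|exact Hti]|exists i; auto].
    + lia.
  - intros [[[Ht Hgt]|[Hs [Hlo Hhi]]]|[Hs Hlt]].
    + split; [exact Hgt|exists n].
      split; [apply extends_t_s, (extends_weaken _ (S n)); [lia|lia|exact Ht]|].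
      rewrite <- (Ht n) by lia. exact diverge.
    + split; exists n; (split; [|assumption]); [apply extends_t_s; [lia|]|]; exact Hs.
    + split; [exists n|exact Hlt].
      split; [apply extends_t_s; [lia|apply (extends_weaken _ (S n)); [lia|exact Hs]]|].
      rewrite (Hs n) in diverge by lia. exact diverge.
Qed.

Lemma between_tame_at : (exists y, between y) -> tame between.
Proof.
  intros [y0 Hy0].
  assert (Hparts : tame_or_empty
            (fun y => (upper_cone t (S n) y \/ middle_part y) \/ lower_cone s (S n) y)).
  { apply tame_or_empty_union; [apply tame_or_empty_union| |].
    - apply tame_or_empty_intro, tame_upper_cone.
    - apply tame_or_empty_intro, tame_cylinder.
    - intros x y [Hx _] [Hy [Hlo _]]. apply (lt_at t n).
      + apply (extends_weaken _ (S n)); [lia|exact Hx].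
      + apply extends_t_s; [lia|exact Hy].
      + rewrite (Hx n) in Hlo by lia. exact Hlo.
    - apply tame_or_empty_intro, tame_lower_cone.
    - intros x y [[Hx _]|[Hx [_ Hhi]]] [Hy _]; apply (lt_at s n).
      + apply extends_t_s, (extends_weaken _ (S n)); [lia|lia|exact Hx].
      + apply (extends_weaken _ (S n)); [lia|exact Hy].
      + rewrite (Hx n), (Hy n) in diverge by lia. exact diverge.
      + exact Hx.
      + apply (extends_weaken _ (S n)); [lia|exact Hy].
      + rewrite (Hy n) in Hhi by lia. exact Hhi. }
  destruct Hparts as [Hempty|Htame].
  - destruct (Hempty y0). apply between_split, Hy0.
  - apply (tame_ext _ _ (fun y => iff_sym (between_split y)) Htame).
Qed.

End Between.

(** A nonempty interval between two cuts is tame: split it at the first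
    index where the cuts differ. *)
Lemma between_tame t s : (exists y, between t s y) -> tame (between t s).
Proof.
  intros [y [[i [Hti Hi]] [j [Hsj Hj]]]].
  destruct (between_index t s y i j Hti Hi Hsj Hj) as [Ht [Hs Hlt]].
  apply (between_tame_at t s (Nat.min i j)); [|exact Hlt|exists y; split; eexists; eauto].
  intros k Hk. rewrite (Ht k Hk), (Hs k Hk). reflexivity.
Qed.

Lemma open_interval_tame I : open_interval I -> tame I.
Proof.
  intros HI. destruct (open_interval_cuts I HI) as [t [s Hts]].
  destruct HI as [[x0 Hx0] _].
  apply (tame_ext (between t s)); [intros y; symmetry; apply Hts|].
  apply between_tame. exists x0. apply Hts, Hx0.
Qed.

(** A tame isomorphism maps each tail-closed set [A] onto [A ∩ S], since it
    keeps every sequence in its tail-equivalence class. *)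
Lemma tame_iso_tail_closed f S (A : Zw -> Prop) : tame_iso f S -> tail_closed A ->
  forall y, (exists x, A x /\ f x = y) <-> (A y /\ S y).
Proof.
  intros [Hin [Hsurj [_ Hsh]]] HA y. split.
  - intros [x [Ax <-]]. split; [|apply Hin].
    exact (HA x (f x) (shift_equiv_tail_equiv _ _ (Hsh x)) Ax).
  - intros [Ay Sy]. destruct (Hsurj y Sy) as [x <-]. exists x; split; [|reflexivity].
    exact (HA (f x) x (shift_equiv_tail_equiv _ _ (shift_equiv_sym _ _ (Hsh x))) Ay).
Qed.

Theorem mainTheorem9 :
  forall I : Zw -> Prop, open_interval I ->
  exists f : Zw -> Zw,
    (* f is an order-isomorphism from Z^omega onto I *)
    (forall x, I (f x)) /\
    (forall y, I y -> exists x, f x = y) /\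
    (forall x y, lex_lt x y <-> lex_lt (f x) (f y)) /\
    (* f[A] = A ∩ I for every tail-closed A *)
    (forall A : Zw -> Prop, tail_closed A ->
       forall y, (exists x, A x /\ f x = y) <-> (A y /\ I y)).
Proof.
  intros I HI.
  destruct (open_interval_tame I HI) as [f Hf].
  exists f. pose proof Hf as [Hin [Hsurj [Hord _]]].
  split; [exact Hin|split; [exact Hsurj|split; [exact Hord|]]].
  intros A HA. exact (tame_iso_tail_closed f I A Hf HA).
Qed.
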